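(* Let $c>0$ and let $\epsilon_1,\dots,\epsilon_n$ be i.i.d. Rademacher variables. Put $L_c(\epsilon)=\max_{0\le j\le n}\big\{\sum_{i=1}^j\epsilon_i-cj\big\}$. Then $$\mathbb E[L_c(\epsilon)]\le 1+\Big(1-\exp\big(-D(\tfrac{c+1}{2}\,\|\,\tfrac12)\big)\Big)^{-2}.$$
   Context: $D(p\|q)=p\log\frac pq+(1-p)\log\frac{1-p}{1-q}$ is the binary Kullback–Leibler divergence, with the convention $D(p\|\frac12)=+\infty$ (so $\exp(-D)=0$) when $p>1$. *)

From HB Require Import structures.
From mathcomp Require Import all_boot all_order all_algebra.
From mathcomp Require Import all_classical all_reals all_analysis.
Set Implicit Arguments. Unset Strict Implicit. Unset Printing Implicit Defensive.
Import Order.TTheory GRing.Theory Num.Theory.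
Local Open Scope ring_scope.

(* Binary KL divergence D(p||q) = p log(p/q) + (1-p) log((1-p)/(1-q)).
   With MathComp's ln 0 = 0, the term 0 * ln 0 is 0 (usual convention). *)
Definition binKL (R : realType) (p q : R) : R :=
  p * ln (p / q) + (1 - p) * ln ((1 - p) / (1 - q)).

Definition expNKLhalf (R : realType) (p : R) : R :=
  if 1 < p then 0 else expR (- binKL p (2^-1)).

Definition rad (R : realType) (b : bool) : R := if b then 1 else -1.

Definition Lc (R : realType) (n : nat) (c : R) (e : {ffun 'I_n -> bool}) : R :=
  \big[Num.max/0]_(j < n.+1)
     ((\sum_(i < n | (i < j)%N) rad R (e i)) - c * j%:R).

(* Expectation under n i.i.d. Rademacher variables: uniform average over
   all 2^n sign patterns. *)
Definition ERad (R : realType) (n : nat) (F : {ffun 'I_n -> bool} -> R) : R :=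
  (2 ^+ n)^-1 * \sum_(e : {ffun 'I_n -> bool}) F e.

From Pilot Require Import Defs.
From HB Require Import structures.
From mathcomp Require Import all_boot all_order all_algebra.
From mathcomp Require Import all_classical all_reals all_analysis.
From mathcomp Require Import ring lra zify.
Set Implicit Arguments. Unset Strict Implicit. Unset Printing Implicit Defensive.
Import Order.TTheory GRing.Theory Num.Theory.
Local Open Scope ring_scope.

(* Proof by the exponential-moment (Chernoff) method.
   Write S_j = eps_1 + ... + eps_j.  Whenever S_j - c j > 0 we have
   S_j - c j <= S_j <= j, so for every lambda >= 0 the maximum L_c is
   bounded pointwise by  sum_j j * exp(lambda (S_j - c j)).  Independence
   gives E[exp(lambda S_j)] = cosh(lambda)^j, hence
     E[L_c] <= sum_j j r^j <= (1 - r)^-2,   r = cosh(lambda) exp(-lambda c),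
   as soon as r < 1.  For 0 < c < 1 the choice
   lambda = (ln(1+c) - ln(1-c)) / 2 gives r = exp(-D((c+1)/2 || 1/2)),
   which is < 1 because the divergence is positive (Gibbs' inequality
   x - 1 < x ln x). *)

Lemma card_ord_lt (n j : nat) : #|[pred i : 'I_n | (i < j)%N]| = minn n j.
Proof.
rewrite -sum1_card -(big_mkord (fun i => i < j)%N (fun=> 1%N)).
elim: n => [|n IH]; first by rewrite big_geq // min0n.
rewrite big_mkcond big_nat_recr //= -big_mkcond IH; case: ifP; lia.
Qed.

(* sum_{j < N} j r^j <= (1 - r)^-2 for 0 <= r < 1, from the closed form
   (1 - r)^2 sum_{j<N} j r^j = r - r^N (N (1 - r) + r). *)
Lemma sum_geom_deriv_le (R : realFieldType) (N : nat) (r : R) :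
  0 <= r -> r < 1 -> \sum_(j < N) j%:R * r ^+ j <= ((1 - r) ^+ 2)^-1.
Proof.
move=> r0 r1.
have closed_form : (1 - r) ^+ 2 * \sum_(j < N) j%:R * r ^+ j
                   = r - r ^+ N * (N%:R * (1 - r) + r).
  elim: N => [|N IH]; first by rewrite big_ord0 expr0 mulr0; ring.
  by rewrite big_ord_recr /= mulrDr IH (exprSr r N) -natr1; ring.
have sq_gt0 : 0 < (1 - r) ^+ 2 by apply: exprn_gt0; lra.
rewrite -(ler_pM2l sq_gt0) mulfV ?gt_eqF // closed_form.
have : 0 <= r ^+ N * (N%:R * (1 - r) + r).
  apply: mulr_ge0; first exact: exprn_ge0.
  by apply: addr_ge0 => //; apply: mulr_ge0 => //; lra.
lra.
Qed.

Lemma xlnx_gt (R : realType) (x : R) : 0 < x -> x != 1 -> x - 1 < x * ln x.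
Proof.
move=> x0 x1.
have lnx_neq0 : - ln x != 0 by rewrite oppr_eq0 ln_eq0.
have := expR_gt1Dx lnx_neq0; rewrite expRN lnK ?posrE // => h.
have : x * (1 + - ln x) < x * x^-1 by rewrite ltr_pM2l.
by rewrite mulfV ?gt_eqF // mulrDr mulr1 mulrN; lra.
Qed.

Section RademacherWalk.
Variable R : realType.

Lemma rad_le1 (b : bool) : Defs.rad R b <= 1.
Proof. by case: b => /=; lra. Qed.

Definition psum (n j : nat) (e : {ffun 'I_n -> bool}) : R :=
  \sum_(i < n | (i < j)%N) Defs.rad R (e i).

Lemma psum_le (n j : nat) (e : {ffun 'I_n -> bool}) : psum j e <= j%:R.
Proof.
apply: (@le_trans _ _ (\sum_(i < n | (i < j)%N) (1 : R))).
  by apply: ler_sum => i _; exact: rad_le1.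
rewrite sumr_const card_ord_lt ler_nat; exact: geq_minr.
Qed.

Lemma Lc_term_le (n : nat) (c : R) (e : {ffun 'I_n -> bool}) (j : nat) :
  0 <= c -> psum j e - c * j%:R <= j%:R.
Proof.
move=> c0; have := psum_le j e.
have : 0 <= c * j%:R by apply: mulr_ge0.
lra.
Qed.

Lemma Lc_le0 (n : nat) (c : R) (e : {ffun 'I_n -> bool}) :
  1 <= c -> Lc c e <= 0.
Proof.
move=> c1; apply: bigmax_le => // j _.
have := psum_le j e; rewrite -/(psum j e).
have : (j%:R : R) <= c * j%:R by rewrite -{1}[j%:R]mul1r ler_wpM2r.
lra.
Qed.

(* Pointwise exponential domination of L_c, for any lambda >= 0: a positive
   term S_j - c j is at most j, and exp(lambda (S_j - c j)) >= 1. *)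
Lemma Lc_le_sum_exp (n : nat) (c l : R) (e : {ffun 'I_n -> bool}) :
  0 <= c -> 0 <= l ->
  Lc c e <= \sum_(j < n.+1) j%:R * expR (l * (psum j e - c * j%:R)).
Proof.
move=> c0 l0.
have terms_ge0 (P : pred 'I_n.+1) :
    0 <= \sum_(j < n.+1 | P j) j%:R * expR (l * (psum j e - c * j%:R)).
  by apply: sumr_ge0 => j _; apply: mulr_ge0 => //; exact: expR_ge0.
apply: bigmax_le => [|j _]; first exact: terms_ge0.
rewrite -/(psum j e).
have [t_le0|t_gt0] := lerP (psum j e - c * j%:R) 0.
  exact: le_trans t_le0 (terms_ge0 xpredT).
rewrite (bigD1 j) //=.
have exp_ge1 : 1 <= expR (l * (psum j e - c * j%:R)).
  by apply: le_trans (expR_ge1Dx _); rewrite lerDl mulr_ge0 // ltW.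
have : (j%:R : R) <= j%:R * expR (l * (psum j e - c * j%:R)).
  by rewrite -{1}[j%:R]mulr1 ler_wpM2l.
have := Lc_term_le e j c0; have := terms_ge0 (predC1 j).
lra.
Qed.

Lemma ERad_le (n : nat) (F G : {ffun 'I_n -> bool} -> R) :
  (forall e, F e <= G e) -> ERad F <= ERad G.
Proof.
move=> FG; rewrite /ERad ler_wpM2l ?invr_ge0 ?exprn_ge0 //.
by apply: ler_sum => e _; exact: FG.
Qed.

Lemma ERad_sum (n N : nat) (a : 'I_N -> R)
    (g : 'I_N -> {ffun 'I_n -> bool} -> R) :
  ERad (fun e => \sum_(j < N) a j * g j e) = \sum_(j < N) a j * ERad (g j).
Proof.
rewrite /ERad exchange_big mulr_sumr; apply: eq_bigr => j _.
by rewrite -mulr_sumr mulrCA.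
Qed.

(* E[exp(lambda eps)] for a single Rademacher sign. *)
Definition cosh (l : R) : R := (expR l + expR (- l)) / 2.

Lemma cosh_ge1 (l : R) : 1 <= cosh l.
Proof. by have := expR_ge1Dx l; have := expR_ge1Dx (- l); rewrite /cosh; lra. Qed.

(* Moment generating function of the walk: by independence of the signs,
   E[exp(lambda S_j)] = cosh(lambda)^(min n j) <= cosh(lambda)^j. *)
Lemma ERad_exp_psum (n j : nat) (l : R) :
  ERad (fun e : {ffun 'I_n -> bool} => expR (l * psum j e)) <= cosh l ^+ j.
Proof.
pose F (i : 'I_n) (b : bool) : R :=
  if (i < j)%N then expR (l * Defs.rad R b) else 1.
have exp_prod (e : {ffun 'I_n -> bool}) :
    expR (l * psum j e) = \prod_(i < n) F i (e i).
  rewrite /psum mulr_sumr expR_sum big_mkcond /=.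
  by apply: eq_bigr => i _; rewrite /F; case: ifP.
have sum_F (i : 'I_n) :
    \sum_(b : bool) F i b = 2 * (if (i < j)%N then cosh l else 1).
  rewrite big_bool /F /=; case: ifP => _; last by rewrite mulr1.
  by rewrite mulr1 mulrN1 /cosh mulrC divfK // pnatr_eq0.
rewrite /ERad (eq_bigr _ (fun e _ => exp_prod e)) -bigA_distr_bigA /=.
rewrite (eq_bigr _ (fun i _ => sum_F i)) big_split /= prodr_const card_ord.
rewrite mulrA mulVf ?expf_neq0 // mul1r -big_mkcond /= prodr_const.
rewrite card_ord_lt; apply: ler_weXn2l; [exact: cosh_ge1 | exact: geq_minr].
Qed.

Lemma ERad_Lc_chernoff (n : nat) (c l : R) :
  0 <= c -> 0 <= l -> cosh l * expR (- (l * c)) < 1 ->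
  ERad (@Lc R n c) <= ((1 - cosh l * expR (- (l * c))) ^+ 2)^-1.
Proof.
move=> c0 l0 r_lt1; set r := cosh l * expR (- (l * c)).
have r_ge0 : 0 <= r.
  by apply: mulr_ge0; [apply: le_trans (cosh_ge1 l) | exact: expR_ge0].
apply: le_trans (sum_geom_deriv_le n.+1 r_ge0 r_lt1).
have split_exp (j : 'I_n.+1) (e : {ffun 'I_n -> bool}) :
    j%:R * expR (l * (psum j e - c * j%:R))
    = (j%:R * expR (- (l * c)) ^+ j) * expR (l * psum j e).
  by rewrite -expRM_natr -mulrA -expRD; congr (_ * expR _); ring.
have dominate (e : {ffun 'I_n -> bool}) : Lc c e <=
    \sum_(j < n.+1) (j%:R * expR (- (l * c)) ^+ j) * expR (l * psum j e).
  by rewrite -(eq_bigr _ (fun j _ => split_exp j e)) Lc_le_sum_exp.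
apply: le_trans (ERad_le dominate) _; rewrite ERad_sum.
apply: ler_sum => j _; rewrite -mulrA ler_wpM2l //.
rewrite /r exprMn [leRHS]mulrC ler_wpM2l ?exprn_ge0 ?expR_ge0 //.
exact: ERad_exp_psum.
Qed.

End RademacherWalk.

Section OptimalTilt.
Variables (R : realType) (c : R).

Lemma binKL_half :
  binKL ((c + 1) / 2) (2^-1 : R)
  = ((1 + c) * ln (1 + c) + (1 - c) * ln (1 - c)) / 2.
Proof.
rewrite /binKL.
have -> : (c + 1) / 2 / 2^-1 = 1 + c by field.
have -> : (1 - (c + 1) / 2) / (1 - 2^-1) = 1 - c by field.
by field.
Qed.

(* Positivity of the divergence for p = (1+c)/2 != 1/2, from Gibbs'
   inequality at x = 1 + c and x = 1 - c. *)
Lemma binKL_half_gt0 (c_gt0 : 0 < c) (c_lt1 : c < 1) :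
  0 < binKL ((c + 1) / 2) (2^-1 : R).
Proof.
rewrite binKL_half.
have [p_gt0 m_gt0] : 0 < 1 + c /\ 0 < 1 - c by split; lra.
have p_ne1 : 1 + c != 1 by rewrite gt_eqF // ltrDl.
have m_ne1 : 1 - c != 1 by rewrite lt_eqF // gtrDl oppr_lt0.
(* The disequalities are dropped so that lra does not case split on them. *)
move: (xlnx_gt p_gt0 p_ne1) (xlnx_gt m_gt0 m_ne1) => {p_ne1 m_ne1}.
lra.
Qed.

Definition tilt : R := (ln (1 + c) - ln (1 - c)) / 2.

Lemma tilt_ge0 (c_gt0 : 0 < c) (c_lt1 : c < 1) : 0 <= tilt.
Proof.
have : ln (1 - c) <= ln (1 + c) by rewrite ler_ln ?posrE; lra.
rewrite /tilt; lra.
Qed.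

(* At the optimal tilt the Chernoff ratio equals exp(-D((c+1)/2 || 1/2)):
   e^lambda e^(-lambda c) = (1+c) e^(-D) and e^(-lambda) e^(-lambda c) = (1-c) e^(-D). *)
Lemma chernoff_ratio_tilt (c_gt0 : 0 < c) (c_lt1 : c < 1) :
  cosh tilt * expR (- (tilt * c)) = expNKLhalf ((c + 1) / 2).
Proof.
rewrite /expNKLhalf ifF; last by apply/negbTE; rewrite -leNgt; lra.
set Y := - binKL ((c + 1) / 2) (2^-1 : R).
have [p_gt0 m_gt0] : 0 < 1 + c /\ 0 < 1 - c by split; lra.
have up : expR tilt * expR (- (tilt * c)) = (1 + c) * expR Y.
  rewrite -[1 + c in RHS]lnK ?posrE // -!expRD /Y binKL_half.
  by congr expR; rewrite /tilt; field.
have down : expR (- tilt) * expR (- (tilt * c)) = (1 - c) * expR Y.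
  rewrite -[1 - c in RHS]lnK ?posrE // -!expRD /Y binKL_half.
  by congr expR; rewrite /tilt; field.
by rewrite /cosh mulrAC mulrDl up down; field.
Qed.

Lemma expNKLhalf_lt1 (c_gt0 : 0 < c) (c_lt1 : c < 1) :
  expNKLhalf ((c + 1) / 2) < 1.
Proof.
rewrite /expNKLhalf ifF.
  by rewrite expR_lt1 oppr_lt0; exact: binKL_half_gt0.
by apply/negbTE; rewrite -leNgt; lra.
Qed.

End OptimalTilt.

Theorem lemma6 (R : realType) (n : nat) (c : R) (hc : 0 < c) :
  @ERad R n (fun e => @Lc R n c e) <=
  1 + ((1 - expNKLhalf ((c + 1) / 2)) ^+ 2)^-1.
Proof.
have inv_sq_ge0 : 0 <= ((1 - expNKLhalf ((c + 1) / 2)) ^+ 2)^-1.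
  by rewrite invr_ge0 sqr_ge0.
have [c_ge1|c_lt1] := lerP 1 c.
  apply: le_trans (ERad_le (fun e => Lc_le0 e c_ge1)) _.
  by rewrite /ERad big1 // mulr0; lra.
have chernoff := ERad_Lc_chernoff n (ltW hc) (tilt_ge0 hc c_lt1).
rewrite chernoff_ratio_tilt // in chernoff.
have := chernoff (expNKLhalf_lt1 hc c_lt1); lra.
Qed.
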